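(* Under the setting in the context, fix $\kappa\in\{1,\dots,m-1\}$, $j\in\mathcal U$ and $k\in\mathcal C$, and let $t^*=T^{\mathcal U\setminus\{j\}}_{(\kappa)}$. Then, almost surely, $$\mathbb E\Big[\frac{\delta_{j,k}(t^* )}{|\hat{\mathcal S}_c(t^* )|+1}\,\mathbf 1\{T_j\le t^*,\ T_k\le t^*\}\ \Big|\ (X_i,Y_i)_{i\in\mathcal U\setminus\{j\}}\Big]=0.$$
   Context: Setting: $\hat\mu,g:\mathbb R^d\to\mathbb R$ fixed deterministic measurable functions; calibration indices $\mathcal C$ ($|\mathcal C|=n$) and disjoint test indices $\mathcal U$ ($|\mathcal U|=m\ge2$); $(X_i,Y_i)$, $i\in\mathcal C\cup\mathcal U$, i.i.d. with continuous score and residual distributions; $T_i=g(X_i)$, $R_i=|Y_i-\hat\mu(X_i)|$; $\alpha\in(0,1)$. $T^{\mathcal U\setminus\{j\}}_{(\kappa)}$ is the $\kappa$-th smallest value of $\{T_i\}_{i\in\mathcal U\setminus\{j\}}$. For $t\in\mathbb R$: $\hat{\mathcal S}_c(t)=\{i\in\mathcal C:T_i\le t\}$; $\mathcal Q(t)$ is the $\lceil(1-\alpha)(|\hat{\mathcal S}_c(t)|+1)\rceil$-th smallest value of $\{R_i: i\in\hat{\mathcal S}_c(t)\cup\{j\}\}$; and $\delta_{j,k}(t)=\mathbf 1\{R_j>\mathcal Q(t)\}-\mathbf 1\{R_k>\mathcal Q(t)\}$. *)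

From HB Require Import structures.
From mathcomp Require Import all_boot all_order all_algebra.
From mathcomp Require Import all_classical all_reals all_analysis.
Set Implicit Arguments. Unset Strict Implicit. Unset Printing Implicit Defensive.
Import Order.TTheory GRing.Theory Num.Theory.
Local Open Scope classical_set_scope.
Local Open Scope ring_scope.

(* Index set: calibration indices C = inl 'I_n, test indices U = inr 'I_m. *)
Definition Idx (n m : nat) : finType := ('I_n + 'I_m)%type.

Definition mutually_independent {d : measure_display} {Omega : measurableType d}
  {R : realType} (P : probability Omega R) {I : finType}
  {dV : measure_display} {V : measurableType dV} (Z : I -> Omega -> V) : Prop :=
  forall B : I -> set V, (forall i, measurable (B i)) ->
    P (\bigcap_(i in [set: I]) (Z i @^-1` B i)) =
    (\prod_(i : I) P (Z i @^-1` B i))%E.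

Definition identically_distributed {d : measure_display} {Omega : measurableType d}
  {R : realType} (P : probability Omega R) {I : finType}
  {dV : measure_display} {V : measurableType dV} (Z : I -> Omega -> V) : Prop :=
  forall i i' (B : set V), measurable B -> P (Z i @^-1` B) = P (Z i' @^-1` B).

Definition continuous_distribution {d : measure_display} {Omega : measurableType d}
  {R : realType} (P : probability Omega R) (X : Omega -> R) : Prop :=
  forall t : R, P (X @^-1` [set t]) = 0%E.

(* Conditional expectation: W is a version of E[X | G] (G a sigma-algebra of
   events). "E[X | G] = W almost surely" means exactly that W is a version. *)
Definition is_cond_exp {d : measure_display} {Omega : measurableType d}
  {R : realType} (P : probability Omega R) (G : set (set Omega))
  (X W : Omega -> R) : Prop :=
  [/\ forall B : set R, measurable B -> G (W @^-1` B),
      P.-integrable setT (EFin \o X),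
      P.-integrable setT (EFin \o W) &
      forall A, G A -> (\int[P]_(w in A) (X w)%:E = \int[P]_(w in A) (W w)%:E)%E].

Definition sigma_gen {d : measure_display} {Omega : measurableType d}
  {I : Type} {dV : measure_display} {V : measurableType dV}
  (J : set I) (Z : I -> Omega -> V) : set (set Omega) :=
  <<s [set A | exists i, exists B, [/\ J i, measurable B & A = Z i @^-1` B]] >>.

(* k-th smallest element (1-based, with multiplicity) of a finite list *)
Definition kth_smallest {R : realType} (s : seq R) (k : nat) : R :=
  nth 0 (sort <=%R s) k.-1.

Section Quantities.
Variables (R : realType) (dd : nat) (n m : nat).
Variables (muhat g : dd.-tuple R -> R) (alpha : R).
Variables (Omega : Type) (Z : Idx n m -> Omega -> (dd.-tuple R * R)%type).

Definition Tsc (i : Idx n m) (w : Omega) : R := g (Z i w).1.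
Definition Res (i : Idx n m) (w : Omega) : R := `|(Z i w).2 - muhat (Z i w).1|.

Definition Shat (t : R) (w : Omega) : seq 'I_n :=
  [seq i <- enum 'I_n | Tsc (inl i) w <= t].

Definition Qt (j : 'I_m) (t : R) (w : Omega) : R :=
  kth_smallest (Res (inr j) w :: [seq Res (inl i) w | i <- Shat t w])
    (absz (Num.ceil ((1 - alpha) * (size (Shat t w)).+1%:R))).

Definition delta (j : 'I_m) (k : 'I_n) (t : R) (w : Omega) : R :=
  ((Qt j t w < Res (inr j) w)%R : nat)%:R - ((Qt j t w < Res (inl k) w)%R : nat)%:R.

Definition tstar (j : 'I_m) (kappa : nat) (w : Omega) : R :=
  kth_smallest [seq Tsc (inr i) w | i <- enum 'I_m & i != j] kappa.

Definition lemma10_quantity (j : 'I_m) (k : 'I_n) (kappa : nat) (w : Omega) : R :=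
  let t := tstar j kappa w in
  delta j k t w / (size (Shat t w)).+1%:R *
  (((Tsc (inr j) w <= t) && (Tsc (inl k) w <= t))%R : nat)%:R.

End Quantities.

From HB Require Import structures.
From mathcomp Require Import all_boot all_order all_algebra.
From mathcomp Require Import all_classical all_reals all_analysis.
From mathcomp Require Import measurable_realfun lra.
Set Implicit Arguments.
Unset Strict Implicit.
Unset Printing Implicit Defensive.
Import Order.TTheory GRing.Theory Num.Theory.
Local Open Scope classical_set_scope.
Local Open Scope ring_scope.

(* The proof is an exchangeability argument.  Exchanging the
   data points j and k leaves t* (which only involves U \ {j}) unchanged; when
   both T_j and T_k lie below t*, it also leaves the calibration set below t*
   and the quantile Q(t* ) unchanged, so it flips the sign of delta_{j,k}.
   Hence the statistic is an antisymmetric function F of the data family Z.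
   Since the data are i.i.d., the swapped family has the same joint law as Z,
   and every event A generated by the conditioning variables is described in
   the same way through Z and through the swapped family; so the integral of
   F(Z) over A equals its own opposite and vanishes. *)

Section order_statistics.
Variable R : realType.

Lemma sorted_nth_le (u : seq R) (t : R) (i : nat) :
  sorted <=%R u -> (i < size u)%N ->
  (nth 0 u i <= t) = (i < count (fun x : R => (x <= t)%R) u)%N.
Proof.
elim: u i => [|x u IH] i //= sorted_xu.
have sorted_u : sorted <=%R u := path_sorted sorted_xu.
have x_le_u : all (fun y => x <= y) u.
  by move: sorted_xu; rewrite (path_sortedE le_trans) => /andP[].
have [x_le_t|t_lt_x] := leP x t.
  by case: i => [|i] //=; rewrite ltnS => /IH ->.
have -> : count (fun y : R => (y <= t)%R) u = 0%N.
  apply/eqP; rewrite -leqn0 leqNgt -has_count; apply/hasPn => y y_in_u.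
  by rewrite -ltNge (lt_le_trans t_lt_x) ?(allP x_le_u).
case: i => [|i] i_lt /=; first by rewrite leNgt t_lt_x.
by rewrite leNgt (lt_le_trans t_lt_x) // (allP x_le_u) // mem_nth.
Qed.

Lemma kth_smallest_le (s : seq R) (kk : nat) (t : R) :
  (kk.-1 < size s)%N ->
  (kth_smallest s kk <= t) = (kk.-1 < count (fun x : R => (x <= t)%R) s)%N.
Proof.
move=> kk_lt; rewrite /kth_smallest sorted_nth_le ?sort_sorted ?size_sort //;
  last exact: le_total.
by apply/congr1/permP; rewrite perm_sort.
Qed.

Lemma kth_smallest_default (s : seq R) (kk : nat) :
  (size s <= kk.-1)%N -> kth_smallest s kk = 0.
Proof. by move=> sz; rewrite /kth_smallest nth_default // size_sort. Qed.

End order_statistics.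

Section measurable_order_statistics.
Context (R : realType) (dO : measure_display) (O : measurableType dO).

Lemma measurable_bool_event (b : O -> bool) :
  measurable_fun setT b -> measurable [set w | b w].
Proof. by move=> mb; rewrite -[X in measurable X]setTI; exact: mb. Qed.

(* A real function whose sublevel sets are all measurable is measurable,
   since the rays ]x, +oo[ generate the Borel sets of R. *)
Lemma measurable_fun_sublevel (h : O -> R) :
  (forall t, measurable [set w | h w <= t]) -> measurable_fun setT h.
Proof.
move=> mh; apply: (@measurability _ _ _ _ setT h _
  (RGenOInfty.measurableE R)).
move=> _ [_ [x ->] <-]; rewrite setTI.
have -> : h @^-1` `]x, +oo[%classic = ~` [set w | h w <= x].
  by apply/seteqP; split => w /=; rewrite in_itv /= andbT ltNge => /negP.
exact: measurableC.
Qed.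

Lemma measurable_count (I : Type) (s : seq I) (f : I -> O -> R) (t : R) :
  (forall i, measurable_fun setT (f i)) ->
  measurable_fun setT (fun w => count (fun i => (f i w <= t)%R) s).
Proof.
move=> mf; elim: s => [|i s IH] /=; first exact: measurable_cst.
apply: measurable_fun_addn IH.
exact: measurableT_comp (measurable_fun_ler (mf i) (measurable_cst t)).
Qed.

Lemma measurable_kth_smallest (I : Type) (s : seq I) (f : I -> O -> R)
    (kk : nat) :
  (forall i, measurable_fun setT (f i)) ->
  measurable_fun setT (fun w => kth_smallest [seq f i w | i <- s] kk).
Proof.
move=> mf; have [s_small|kk_lt] := leqP (size s) kk.-1.
  apply: (eq_measurable_fun (cst (0 : R))); last exact: measurable_cst.
  by move=> w _; rewrite kth_smallest_default ?size_map.
apply: measurable_fun_sublevel => t.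
rewrite (_ : [set w | _ <= t] =
    [set w | (kk.-1 < count (fun i => (f i w <= t)%R) s)%N]).
  apply: measurable_bool_event.
  exact: measurable_fun_ltn (measurable_cst _) (measurable_count s t mf).
by apply/seteqP; split => w /=; rewrite kth_smallest_le ?size_map // count_map.
Qed.

Lemma measurable_fun_select (A : finType) (S : O -> A) (q : A -> O -> R) :
  (forall a, measurable (S @^-1` [set a])) ->
  (forall a, measurable_fun setT (q a)) ->
  measurable_fun setT (fun w => q (S w) w).
Proof.
move=> mS mq _ B mB; rewrite setTI.
have -> : (fun w => q (S w) w) @^-1` B =
    \bigcup_(a in [set: A]) (S @^-1` [set a] `&` q a @^-1` B).
  apply/seteqP; split => [w Bw|w [a _ [/= <- //]]].
  by exists (S w) => //; split.
apply: fin_bigcup_measurable; first exact: finite_finset.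
move=> a _; apply: measurableI => //.
by rewrite -[X in measurable X]setTI; exact: mq.
Qed.

End measurable_order_statistics.

Section measurable_statistic.
Variables (R : realType) (dd n m : nat) (muhat g : dd.-tuple R -> R).
Variables (alpha : R) (j : 'I_m) (k : 'I_n) (kappa : nat).
Hypotheses (mmuhat : measurable_fun setT muhat) (mg : measurable_fun setT g).
Variables (dO : measure_display) (O : measurableType dO).
Variable Z : Idx n m -> O -> (dd.-tuple R * R)%type.
Hypothesis mZ : forall i, measurable_fun setT (Z i).

Lemma measurable_Tsc i : measurable_fun setT (Tsc g Z i).
Proof. exact/(measurableT_comp mg)/measurableT_comp. Qed.

Lemma measurable_Res i : measurable_fun setT (Res muhat Z i).
Proof.
apply: (measurableT_comp (@normr_measurable R setT)); apply: measurable_funB.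
  exact: measurableT_comp.
exact/(measurableT_comp mmuhat)/measurableT_comp.
Qed.

Let t_star := tstar g Z j kappa.

Lemma measurable_tstar : measurable_fun setT t_star.
Proof.
rewrite /t_star /tstar.
exact: (measurable_kth_smallest _ _ (fun i => measurable_Tsc (inr i))).
Qed.

Definition quantile_at (s : seq 'I_n) (w : O) : R :=
  kth_smallest (Res muhat Z (inr j) w :: [seq Res muhat Z (inl i) w | i <- s])
    (absz (Num.ceil ((1 - alpha) * (size s).+1%:R))).

Definition quantity_at (s : seq 'I_n) (w : O) : R :=
  (((quantile_at s w < Res muhat Z (inr j) w)%R : nat)%:R -
   ((quantile_at s w < Res muhat Z (inl k) w)%R : nat)%:R) / (size s).+1%:R *
  (((Tsc g Z (inr j) w <= t_star w) && (Tsc g Z (inl k) w <= t_star w))%R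
    : nat)%:R.

Lemma lemma10_quantity_at w : lemma10_quantity muhat g alpha Z j k kappa w =
  quantity_at (Shat g Z (t_star w) w) w.
Proof. by []. Qed.

Lemma measurable_quantile_at s : measurable_fun setT (quantile_at s).
Proof.
have := measurable_kth_smallest (inr j :: [seq inl i | i <- s])
  (absz (Num.ceil ((1 - alpha) * (size s).+1%:R))) measurable_Res.
by apply: eq_measurable_fun => w _; rewrite /= -map_comp.
Qed.

Lemma measurable_quantity_at s : measurable_fun setT (quantity_at s).
Proof.
have mnat (b : O -> bool) : measurable_fun setT b ->
    measurable_fun setT (fun w => ((b w : nat)%:R : R)).
  move=> mb; exact: (measurableT_comp (f := fun x : bool => (x : nat)%:R : R)).
apply: measurable_funM; first apply: measurable_funM => //.
  apply: measurable_funB; apply/mnat/measurable_fun_ltr;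
    exact: measurable_quantile_at || exact: measurable_Res.
apply/mnat/measurable_and; apply: measurable_fun_ler;
  exact: measurable_Tsc || exact: measurable_tstar.
Qed.

(* The statistic is measurable: it selects one of the measurable functions
   quantity_at s according to the calibration set below t*, an event which
   is measurable coordinatewise. *)
Lemma measurable_lemma10_quantity :
  measurable_fun setT (lemma10_quantity muhat g alpha Z j k kappa).
Proof.
pose below (w : O) : {set 'I_n} := [set i | Tsc g Z (inl i) w <= t_star w]%SET.
have mbelow i : measurable_fun setT (fun w => Tsc g Z (inl i) w <= t_star w).
  exact: measurable_fun_ler (measurable_Tsc _) measurable_tstar.
apply: (eq_measurable_fun (fun w =>
    quantity_at [seq i <- enum 'I_n | i \in below w] w)).
  move=> w _; rewrite lemma10_quantity_at; congr quantity_at.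
  by apply: eq_filter => i; rewrite inE.
apply: (measurable_fun_select (S := below)
  (q := fun a => quantity_at [seq i <- enum 'I_n | i \in a])) => a;
  last exact: measurable_quantity_at.
rewrite (_ : below @^-1` [set a] = \bigcap_(i in [set: 'I_n])
    ((fun w => Tsc g Z (inl i) w <= t_star w) @^-1` [set i \in a])).
  apply: fin_bigcap_measurable; first exact: finite_finset.
  by move=> i _; rewrite -[X in measurable X]setTI; exact: mbelow.
apply/seteqP; split => [w /= <- i _|w /= below_w]; first by rewrite inE.
by apply/setP => i; rewrite inE (below_w i).
Qed.

End measurable_statistic.

Lemma bounded_integrable (R : realType) (dT : measure_display)
    (T : measurableType dT) (mu : {finite_measure set T -> \bar R})
    (f : T -> R) (c : R) :
  measurable_fun setT f -> (forall x, `|f x| <= c) ->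
  mu.-integrable setT (EFin \o f).
Proof.
move=> mf f_le_c; apply: (le_integrable measurableT (g := cst c%:E)).
- exact/measurable_EFinP.
- by move=> x _ /=; rewrite lee_fin (le_trans (f_le_c x)) ?ler_norm.
- exact: finite_measure_integrable_cst.
Qed.

Lemma norm_indicator_ratio_le1 (R : realType) (a b c : bool) (p : nat) :
  `|(((a : nat)%:R - (b : nat)%:R) / p.+1%:R * (c : nat)%:R : R)| <= 1.
Proof.
case: c; last by rewrite mulr0 normr0 ler01.
rewrite mulr1 normrM normfV (ger0_norm (ler0n _ _)).
rewrite ler_pdivrMr ?ltr0Sn // mul1r.
apply: (@le_trans _ _ 1); last by rewrite ler1n.
by case: a; case: b; rewrite ?subrr ?subr0 ?sub0r ?normrN ?normr0 ?normr1.
Qed.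

Lemma integrable_lemma10_quantity (R : realType) (dd n m : nat)
    (muhat g : dd.-tuple R -> R) (alpha : R) (j : 'I_m) (k : 'I_n)
    (kappa : nat) (d : measure_display) (Omega : measurableType d)
    (P : probability Omega R) (Z : Idx n m -> Omega -> (dd.-tuple R * R)%type) :
  measurable_fun setT muhat -> measurable_fun setT g ->
  (forall i, measurable_fun setT (Z i)) ->
  P.-integrable setT (EFin \o lemma10_quantity muhat g alpha Z j k kappa).
Proof.
move=> mmuhat mg mZ; apply: (bounded_integrable _ (c := 1)).
  exact: measurable_lemma10_quantity.
by move=> w; exact: norm_indicator_ratio_le1.
Qed.

Lemma perm_eq_exchange (T U : eqType) (s : seq T) (k : T) (h h' : T -> U)
    (a b : U) :
  uniq s -> k \in s -> h k = a -> h' k = b -> {in predC1 k, h' =1 h} ->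
  perm_eq (a :: map h' s) (b :: map h s).
Proof.
move=> uniq_s k_in_s hk h'k h'_h.
have s_perm := perm_to_rem k_in_s.
apply: (@perm_trans _ (a :: map h' (k :: rem k s))).
  by rewrite perm_cons perm_map.
apply: (@perm_trans _ (b :: map h (k :: rem k s))); last first.
  by rewrite perm_cons perm_map // perm_sym.
rewrite /=; have -> : map h' (rem k s) = map h (rem k s).
  by apply/eq_in_map => i; rewrite mem_rem_uniq // => /andP[ik _]; exact: h'_h.
by rewrite h'k hk -cat1s -[b :: _]cat1s perm_catCA.
Qed.

Section exchange_symmetry.
Variables (R : realType) (dd n m : nat) (muhat g : dd.-tuple R -> R).
Variables (alpha : R) (j : 'I_m) (k : 'I_n) (kappa : nat).

Definition swap_jk (i : Idx n m) : Idx n m :=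
  if i == inr j then inl k else if i == inl k then inr j else i.

Lemma swap_jk_involutive : involutive swap_jk.
Proof.
move=> i; rewrite /swap_jk.
have [->|ij] := eqVneq i (inr j); first by rewrite eqxx.
have [->|ik] := eqVneq i (inl k); first by rewrite eqxx.
by rewrite (negbTE ij) (negbTE ik).
Qed.

Lemma swap_jk_inr i : i != j -> swap_jk (inr i) = inr i.
Proof. by move=> ij; rewrite /swap_jk /= (inj_eq inr_inj) (negbTE ij). Qed.

Lemma swap_jk_inl i : i != k -> swap_jk (inl i) = inl i.
Proof. by move=> ik; rewrite /swap_jk /= (inj_eq inl_inj) (negbTE ik). Qed.

Variables (Omega : Type) (Z : Idx n m -> Omega -> (dd.-tuple R * R)%type).
Let Zs := fun i => Z (swap_jk i).

(* Exchanging the data points j and k flips the sign of the statistic: the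
   threshold t* only involves the other test points, the calibration set below
   t* and the quantile Q(t* ) are unchanged when both T_j, T_k are below t*,
   and delta_{j,k} is antisymmetric. *)
Lemma lemma10_quantity_swap w :
  lemma10_quantity muhat g alpha Zs j k kappa w =
  - lemma10_quantity muhat g alpha Z j k kappa w.
Proof.
have [Tj Tk] : Tsc g Zs (inr j) w = Tsc g Z (inl k) w /\
    Tsc g Zs (inl k) w = Tsc g Z (inr j) w.
  by rewrite /Tsc /Zs /swap_jk !eqxx.
have [Rj Rk] : Res muhat Zs (inr j) w = Res muhat Z (inl k) w /\
    Res muhat Zs (inl k) w = Res muhat Z (inr j) w.
  by rewrite /Res /Zs /swap_jk !eqxx.
have t_eq : tstar g Zs j kappa w = tstar g Z j kappa w.
  rewrite /tstar; congr kth_smallest; apply/eq_in_map => i.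
  by rewrite mem_filter => /andP[ij _]; rewrite /Tsc /Zs swap_jk_inr.
rewrite /lemma10_quantity t_eq Tj Tk; set t := tstar g Z j kappa w.
case Tj_le : (Tsc g Z (inr j) w <= t); last by rewrite !andbF /= !mulr0 oppr0.
case Tk_le : (Tsc g Z (inl k) w <= t); last by rewrite /= !mulr0 oppr0.
have S_eq : Shat g Zs t w = Shat g Z t w.
  rewrite /Shat; apply: eq_filter => i.
  have [->|ik] := eqVneq i k; first by rewrite Tk Tj_le Tk_le.
  by rewrite /Tsc /Zs swap_jk_inl.
have Q_eq : Qt muhat g alpha Zs j t w = Qt muhat g alpha Z j t w.
  rewrite /Qt S_eq /kth_smallest; congr nth; apply/perm_sort_leP.
  apply: (perm_eq_exchange (k := k)) => //.
  - exact/filter_uniq/enum_uniq.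
  - by rewrite mem_filter mem_enum Tk_le.
  - by move=> i /= ik; rewrite /Res /Zs swap_jk_inl.
by rewrite /delta Q_eq S_eq Rj Rk -!mulNr opprB.
Qed.

End exchange_symmetry.

Section family_space.
Variables (I : finType) (dV : measure_display) (V : measurableType dV).

Definition rectangle (B : I -> set V) : set (I -> V) :=
  [set f | forall i, B i (f i)].

Definition rectangles : set (set (I -> V)) :=
  [set X | exists2 B : I -> set V,
    (forall i, measurable (B i)) & X = rectangle B].

End family_space.

Notation family_space I V := (g_sigma_algebraType (@rectangles I _ V)).

Section family_space_measurability.
Variables (I : finType) (dV : measure_display) (V : measurableType dV).
Variables (dO : measure_display) (O : measurableType dO).

Lemma measurable_coord i :
  measurable_fun setT (fun f : family_space I V => f i).
Proof.
move=> _ B mB; rewrite setTI; apply: sub_sigma_algebra.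
exists (fun i' => if i' == i then B else setT) => [i'|]; first by case: ifP.
apply/seteqP; split => [f /= + i'|f /(_ i)]; last by rewrite eqxx.
by case: eqP => [->|].
Qed.

Definition joint (Y : I -> O -> V) (w : O) : family_space I V := fun i => Y i w.

Lemma preimage_joint_rectangle (Y : I -> O -> V) (B : I -> set V) :
  joint Y @^-1` rectangle B = \bigcap_(i in [set: I]) (Y i @^-1` B i).
Proof. by apply/seteqP; split => [w /= Bw i _|w /= Bw i]; exact: Bw. Qed.

Lemma measurable_joint (Y : I -> O -> V) :
  (forall i, measurable_fun setT (Y i)) -> measurable_fun setT (joint Y).
Proof.
move=> mY; apply: (@measurability _ _ O (family_space I V) setT _
  (@rectangles I _ V) erefl).
move=> _ [_ [B mB ->] <-]; rewrite setTI preimage_joint_rectangle.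
apply: fin_bigcap_measurable => [|i _]; first exact: finite_finset.
by rewrite -[X in measurable X]setTI; exact: mY.
Qed.

End family_space_measurability.

Definition law (R : realType) (d : measure_display) (Omega : measurableType d)
    (P : probability Omega R) (dT : measure_display) (T : measurableType dT)
    (Y : Omega -> T) (mY : measurable_fun setT Y) : {measure set T -> \bar R} :=
  measure_function_pushforward__canonical__measure_function_Measure P mY.

Section permuted_law.
Variables (I : finType) (dV : measure_display) (V : measurableType dV).
Variables (R : realType) (d : measure_display) (Omega : measurableType d).
Variables (P : probability Omega R) (Z : I -> Omega -> V) (s : I -> I).
Hypotheses (mZ : forall i, measurable_fun setT (Z i))
  (indep : mutually_independent P Z) (ident : identically_distributed P Z)
  (s_inv : involutive s).

(* An independent, identically distributed family has the same joint law
   after permuting its indices: both laws agree on rectangles, which form a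
   pi-system generating the product sigma-algebra. *)
Lemma joint_law_permute (B : set (family_space I V)) : measurable B ->
  P (joint Z @^-1` B) = P (joint (Z \o s) @^-1` B).
Proof.
have mZs i : measurable_fun setT ((Z \o s) i) by exact: mZ.
move=> mB; apply: (@measure_unique _ R (family_space I V) (@rectangles I _ V)
  (fun=> setT) erefl _ _ _ (law P (measurable_joint mZ))
  (law P (measurable_joint mZs)) _ _ B mB).
- move=> _ _ [B1 mB1 ->] [B2 mB2 ->].
  exists (fun i => B1 i `&` B2 i) => [i|]; first exact: measurableI.
  apply/seteqP; split => [f [B1f B2f] i|f Bf]; first by split.
  by split => i; case: (Bf i).
- by move=> _; exists (fun=> setT) => //; apply/seteqP; split.
- by apply/seteqP; split => // x _; exists 0%N.
- move=> _ [C mC ->]; rewrite /law /= /pushforward.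
  rewrite !preimage_joint_rectangle indep //.
  have -> : \bigcap_(i in [set: I]) ((Z \o s) i @^-1` C i) =
      \bigcap_(i in [set: I]) (Z i @^-1` C (s i)).
    apply/seteqP; split => [w /= Cw i _|w /= Cw i _].
      by rewrite -[i in Z i]s_inv; exact: Cw.
    by rewrite -[i in C i]s_inv; exact: Cw.
  rewrite indep => [|i]; last exact: mC.
  rewrite (reindex_inj (inv_inj s_inv)); apply: eq_bigr => i _.
  exact: ident.
- by move=> _; rewrite /law /= /pushforward preimage_setT probability_setT ltry.
Qed.

End permuted_law.

Section sign_flip.
Local Open Scope ereal_scope.
Variables (R : realType) (d : measure_display) (Omega : measurableType d).
Variables (P : probability Omega R).
Variables (dT : measure_display) (T : measurableType dT).

Lemma integral_sign_flip (Y Y' : Omega -> T) (F : T -> R) (B : set T) :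
  measurable_fun setT Y -> measurable_fun setT Y' -> measurable_fun setT F ->
  (forall C, measurable C -> P (Y @^-1` C) = P (Y' @^-1` C)) ->
  P.-integrable setT (EFin \o (F \o Y)) ->
  (forall w, F (Y' w) = - F (Y w))%R ->
  measurable B -> Y @^-1` B = Y' @^-1` B ->
  \int[P]_(w in Y @^-1` B) (F (Y w))%:E = 0.
Proof.
move=> mY mY' mF same_law intFY flip mB same_event.
have mYB : measurable (Y @^-1` B).
  by rewrite -[X in measurable X]setTI; exact: mY.
have intFY_B : P.-integrable (Y @^-1` B) (EFin \o (F \o Y)).
  exact: integrableS intFY.
have intFY'_B : P.-integrable (Y' @^-1` B) (EFin \o (F \o Y')).
  rewrite -same_event; apply: eq_integrable (integrableN intFY_B) => //.
  by move=> w _; rewrite /= flip.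
have mEF : measurable_fun setT (EFin \o F) by exact/measurable_EFinP.
have transfer : \int[P]_(w in Y @^-1` B) (F (Y w))%:E =
    \int[P]_(w in Y' @^-1` B) (F (Y' w))%:E.
  rewrite -(integral_pushforward mY mEF intFY_B mB).
  rewrite -(integral_pushforward mY' mEF intFY'_B mB).
  apply: (@eq_measure_integral _ _ _ _ (law P mY') (law P mY)) => C mC _.
  exact: same_law.
have fin_int := integrable_fin_num mYB intFY_B.
move: transfer; rewrite -same_event.
under [X in _ = X]eq_integral do rewrite flip EFinN.
rewrite integralN; last first.
  by rewrite fin_num_adde_defl // fin_numN (integrable_neg_fin_num mYB intFY_B).
move: fin_int; case: (\int[P]_(w in Y @^-1` B) (F (Y w))%:E) => // r _ [r_eq].
by congr EFin; lra.
Qed.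

End sign_flip.

Lemma sigma_gen_joint (I : finType) (dV : measure_display)
    (V : measurableType dV) (d : measure_display) (Omega : measurableType d)
    (J : set I) (Z : I -> Omega -> V) (s : I -> I) :
  (forall i, J i -> s i = i) ->
  forall A, sigma_gen J Z A ->
  exists2 B : set (family_space I V), measurable B &
    A = joint Z @^-1` B /\ A = joint (Z \o s) @^-1` B.
Proof.
move=> s_fixes_J.
pose joint_events := [set A : set Omega | exists2 B : set (family_space I V),
  measurable B & A = joint Z @^-1` B /\ A = joint (Z \o s) @^-1` B].
suff sub : sigma_gen J Z `<=` joint_events by move=> A /sub.
apply: smallest_sub; first split.
- by exists set0 => //; rewrite !preimage_set0.
- move=> _ [B mB [-> eqB]]; exists (~` B); first exact: measurableC.
  by rewrite setTD -!preimage_setC -eqB.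
- move=> F /(_ _)/cid2 F_B; exists (\bigcup_i sval (F_B i)).
    by apply: bigcupT_measurable => i; case: (svalP (F_B i)).
  rewrite !preimage_bigcup; split; apply: eq_bigcupr => i _;
    by case: (svalP (F_B i)) => _ [].
- move=> _ [i [C [Ji mC ->]]].
  exists [set f : family_space I V | C (f i)].
    by rewrite -[X in measurable X]setTI; exact: measurable_coord.
  by split => //; rewrite /joint /preimage /= s_fixes_J.
Qed.

Lemma is_cond_exp_zero (R : realType) (d : measure_display)
    (Omega : measurableType d) (P : probability Omega R)
    (G : set (set Omega)) (X : Omega -> R) :
  sigma_algebra setT G -> P.-integrable setT (EFin \o X) ->
  (forall A, G A -> (\int[P]_(w in A) (X w)%:E = 0)%E) ->
  is_cond_exp P G X (fun=> 0).
Proof.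
move=> [G0 GC _] intX X_zero; split => //.
- move=> B _; have [B0|B0] := pselect (B 0).
    rewrite (_ : _ @^-1` B = setT `\` set0); first exact: GC.
    by rewrite setD0; apply/seteqP; split.
  by rewrite (_ : _ @^-1` B = set0) //; apply/seteqP; split.
- exact: finite_measure_integrable_cst.
- by move=> A GA; rewrite X_zero // integral0_eq.
Qed.

Theorem lemma10 (R : realType) (dd n m : nat)
  (muhat g : dd.-tuple R -> R) (alpha : R)
  (d : measure_display) (Omega : measurableType d) (P : probability Omega R)
  (Z : Idx n m -> Omega -> (dd.-tuple R * R)%type)
  (kappa : nat) (j : 'I_m) (k : 'I_n) :
  measurable_fun setT muhat -> measurable_fun setT g ->
  (2 <= m)%N -> 0 < alpha < 1 ->
  (forall i, measurable_fun setT (Z i)) ->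
  mutually_independent P Z -> identically_distributed P Z ->
  (forall i, continuous_distribution P (Tsc g Z i)) ->
  (forall i, continuous_distribution P (Res muhat Z i)) ->
  (1 <= kappa <= m.-1)%N ->
  is_cond_exp P
    (sigma_gen [set i : Idx n m | exists i', i = inr i' /\ i' != j] Z)
    (lemma10_quantity muhat g alpha Z j k kappa)
    (fun _ => 0).
Proof.
move=> mmuhat mg _ _ mZ indep ident _ _ _.
pose s := swap_jk j k.
have mZs i : measurable_fun setT ((Z \o s) i) by exact: mZ.
pose F := lemma10_quantity muhat g alpha
  (fun i (f : family_space (Idx n m) _) => f i) j k kappa.
have mF : measurable_fun setT F.
  by apply: measurable_lemma10_quantity => //; exact: measurable_coord.
apply: is_cond_exp_zero; first exact: smallest_sigma_algebra.
  exact: integrable_lemma10_quantity.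
move=> A /(sigma_gen_joint (s := s)) [|B mB [-> A_Zs]].
  by move=> _ [i' [-> i'_neq_j]]; exact: swap_jk_inr.
apply: (integral_sign_flip (Y' := joint (Z \o s)) (F := F)) => //.
- exact: measurable_joint.
- exact: measurable_joint.
- exact: joint_law_permute (swap_jk_involutive j k).
- exact: integrable_lemma10_quantity.
- by move=> w; exact: (lemma10_quantity_swap muhat g alpha j k kappa Z w).
Qed.
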